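(* Let $g(t)$, $t\in[0,T)$, be the Ricci flow solution on $S^1\times S^3$ of the form $g(t)=\phi^2dz^2+a^2\omega^1\otimes\omega^1+b^2\omega^2\otimes\omega^2+c^2\omega^3\otimes\omega^3$ starting from initial data with $0<a\le b\le c$, and suppose the flow becomes singular at a finite time $T$ with $\check a(T)=0$, where $\check a(t)=\min_s a(s,t)$. Then $T\ge \frac{\check a(0)^2}{4}$.
   Context: $S^3=SU(2)$ carries a global left-invariant frame $E_1,E_2,E_3$ with $[E_i,E_j]=-2\epsilon_{ijk}E_k$ and dual coframe $\omega^i$; $z\in S^1=[0,2\pi)$, $\phi,a,b,c$ positive smooth $2\pi$-periodic functions; $s$ is the arclength coordinate $ds=\phi\,dz$. The Ricci flow $\partial_tg=-2\mathrm{Ric}(g)$ preserves this form. *)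

From Stdlib Require Import Reals List.
From Coquelicot Require Import Coquelicot.
Open Scope R_scope.

(* Functions of (z, t): z the S^1 coordinate (2*PI-periodic), t time. *)

Fixpoint dp (l : list bool) (f : R -> R -> R) : R -> R -> R :=
  match l with
  | nil => f
  | true :: l' => fun z t => Derive (fun z' => dp l' f z' t) z
  | false :: l' => fun z t => Derive (fun t' => dp l' f z t') t
  end.

Definition smooth_before (T : R) (f : R -> R -> R) : Prop :=
  forall (l : list bool) (z t : R), t < T ->
    ex_derive (fun z' => dp l f z' t) z /\
    ex_derive (fun t' => dp l f z t') t /\
    continuous (fun p : R * R => dp l f (fst p) (snd p)) (z, t).

Definition periodic_z (f : R -> R -> R) : Prop :=
  forall z t, f (z + 2 * PI) t = f z t.

Definition d_s (phi f : R -> R -> R) : R -> R -> R :=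
  fun z t => Derive (fun z' => f z' t) z / phi z t.

Definition d_ss (phi f : R -> R -> R) : R -> R -> R := d_s phi (d_s phi f).

Definition d_t (f : R -> R -> R) : R -> R -> R :=
  fun z t => Derive (fun t' => f z t') t.

(* The Ricci flow dg/dt = -2 Ric(g) for
   g = phi^2 dz^2 + a^2 w1^2 + b^2 w2^2 + c^2 w3^2 on S^1 x S^3,
   with [E_i,E_j] = -2 eps_ijk E_k, written as the equivalent PDE system
   (Ric(e1,e1) = -a_ss/a - (a_s/a)(b_s/b + c_s/c) + 2(a^4-(b^2-c^2)^2)/(a^2 b^2 c^2),
    Ric(d_s,d_s) = -(a_ss/a + b_ss/b + c_ss/c), all off-diagonal terms zero). *)
Definition ricci_flow_eqs (phi a b c : R -> R -> R) (z t : R) : Prop :=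
  let a_s := d_s phi a z t in
  let b_s := d_s phi b z t in
  let c_s := d_s phi c z t in
  let A := a z t in let B := b z t in let C := c z t in
  d_t a z t = d_ss phi a z t + a_s * (b_s / B + c_s / C)
              - 2 * (A ^ 4 - (B ^ 2 - C ^ 2) ^ 2) / (A * B ^ 2 * C ^ 2) /\
  d_t b z t = d_ss phi b z t + b_s * (a_s / A + c_s / C)
              - 2 * (B ^ 4 - (A ^ 2 - C ^ 2) ^ 2) / (A ^ 2 * B * C ^ 2) /\
  d_t c z t = d_ss phi c z t + c_s * (a_s / A + b_s / B)
              - 2 * (C ^ 4 - (A ^ 2 - B ^ 2) ^ 2) / (A ^ 2 * B ^ 2 * C) /\
  d_t phi z t = phi z t * (d_ss phi a z t / A + d_ss phi b z t / B
                           + d_ss phi c z t / C).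

(* (phi,a,b,c) is a smooth Ricci flow solution of the above form on [0,T):
   smooth (up to t = 0, via a smooth extension to t < 0), 2*PI-periodic in z,
   positive, and solving the flow for 0 <= t < T. *)
Definition is_RF_solution (T : R) (phi a b c : R -> R -> R) : Prop :=
  (forall f, In f (phi :: a :: b :: c :: nil) ->
     smooth_before T f /\ periodic_z f /\
     (forall z t, 0 <= t < T -> 0 < f z t)) /\
  (forall z t, 0 <= t < T -> ricci_flow_eqs phi a b c z t).

Definition is_spatial_min (f : R -> R -> R) (t m : R) : Prop :=
  (exists z, f z t = m) /\ (forall z, m <= f z t).

Definition min_tends_to_zero (f : R -> R -> R) (T : R) : Prop :=
  forall eps, 0 < eps -> exists delta, 0 < delta /\
    forall t, T - delta < t < T -> exists z, f z t < eps.

From Stdlib Require Import Reals List Lra Classical ClassicalEpsilon.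
From Coquelicot Require Import Coquelicot.
Open Scope R_scope.

(* At a spatial minimum of a with a <= b and a <= c, the flow gives
   d_s a = 0, d_ss a >= 0 and a * (reaction term) <= 2, hence d_t (a^2) >= -4.  So for
   every eps > 0 the squares of a, b, c stay strictly above m^2 - eps - 4 (1 + eps) t,
   which is checked by continuous induction in t: the first touching point would be a
   spatial minimum where the barrier gap has positive time derivative.  Since min a
   tends to 0 at T, this forces m^2 <= 4 T. *)

Lemma is_derive_pos_lt_left (g : R -> R) x D : is_derive g x D -> 0 < D ->
  exists d, 0 < d /\ forall h, 0 < h < d -> g (x - h) < g x.
Proof.
  intros Hg HD. apply is_derive_Reals in Hg.
  destruct (Hg (D / 2)) as [d Hd]; [lra|].
  exists d; split; [apply cond_pos|]. intros h [h0 hd].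
  assert (Hh : Rabs (- h) < d) by (rewrite Rabs_Ropp, Rabs_pos_eq; lra).
  specialize (Hd (- h) ltac:(lra) Hh).
  set (q := (g (x + - h) - g x) / - h) in Hd.
  assert (Hq : g (x - h) - g x = q * - h) by (unfold q, Rminus; field; lra).
  apply Rabs_def2 in Hd. nra.
Qed.

Lemma is_derive_le0_at_first_zero (g : R -> R) tau D :
  0 < tau -> is_derive g tau D -> g tau = 0 ->
  (forall s, 0 <= s < tau -> 0 < g s) -> D <= 0.
Proof.
  intros Htau Hg Hzero Hpos. apply Rnot_lt_le; intro HD.
  destruct (is_derive_pos_lt_left g tau D Hg HD) as [d [Hd Hleft]].
  set (h := Rmin d tau / 2).
  assert (0 < Rmin d tau) by (apply Rmin_pos; lra).
  pose proof (Rmin_l d tau); pose proof (Rmin_r d tau).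
  specialize (Hleft h ltac:(unfold h; lra)).
  specialize (Hpos (tau - h) ltac:(unfold h; lra)).
  lra.
Qed.

Lemma continuous_ge0_of_pos_before (g : R -> R) tau :
  0 < tau -> continuous g tau -> (forall s, 0 <= s < tau -> 0 < g s) -> 0 <= g tau.
Proof.
  intros Htau Hg Hpos. apply Rnot_lt_le; intro Hneg.
  destruct (proj1 (filterlim_locally _ _) Hg (mkposreal (- g tau / 2) ltac:(lra)))
    as [d Hd].
  set (h := Rmin d tau / 2).
  assert (0 < Rmin d tau) by (apply Rmin_pos; [apply cond_pos | lra]).
  pose proof (Rmin_l d tau); pose proof (Rmin_r d tau).
  assert (Hball : Rabs (tau - h - tau) < d) by (rewrite Rabs_left; unfold h; lra).
  specialize (Hd (tau - h) Hball). specialize (Hpos (tau - h) ltac:(unfold h; lra)).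
  apply Rabs_def2 in Hd. unfold minus, plus, opp in Hd; simpl in Hd. lra.
Qed.

Lemma Derive_eq0_at_min (g : R -> R) x :
  ex_derive g x -> (forall y, g x <= g y) -> Derive g x = 0.
Proof.
  intros Hg Hmin. rewrite <- (Derive_Reals g x (ex_derive_Reals_0 _ _ Hg)).
  apply (deriv_minimum g (x - 1) (x + 1)); auto; lra.
Qed.

Lemma Derive2_ge0_at_min (g : R -> R) x :
  (forall y, ex_derive g y) -> ex_derive (Derive g) x -> (forall y, g x <= g y) ->
  0 <= Derive (Derive g) x.
Proof.
  intros Hg Hg' Hmin. apply Rnot_lt_le; intro Hneg.
  assert (Hcrit : Derive g x = 0) by (apply Derive_eq0_at_min; auto).
  destruct (is_derive_pos_lt_left (fun y => - Derive g y) x _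
              (is_derive_opp _ _ _ (Derive_correct _ _ Hg')) ltac:(unfold opp; simpl; lra))
    as [d [Hd Hleft]].
  destruct (MVT_cor2 g (Derive g) (x - d / 2) x) as [c [Hmvt Hc]]; [lra|..].
  { intros c _. apply is_derive_Reals, Derive_correct, Hg. }
  specialize (Hleft (x - c) ltac:(lra)).
  replace (x - (x - c)) with c in Hleft by ring.
  specialize (Hmin (x - d / 2)). nra.
Qed.

Lemma d_s_d_ss_at_spatial_min (T : R) (phi f : R -> R -> R) z0 t :
  smooth_before T f -> smooth_before T phi -> t < T -> 0 < phi z0 t ->
  (forall z, f z0 t <= f z t) ->
  d_s phi f z0 t = 0 /\ 0 <= d_ss phi f z0 t.
Proof.
  intros Hf Hphi Ht Hphi0 Hmin.
  assert (Hf' : forall z, ex_derive (fun z' => f z' t) z) by (intro z; apply (Hf nil z t Ht)).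
  assert (Hf'' : ex_derive (Derive (fun z => f z t)) z0) by apply (Hf (true :: nil) z0 t Ht).
  assert (Hcrit : Derive (fun z => f z t) z0 = 0) by (apply Derive_eq0_at_min; auto).
  split.
  - unfold d_s. rewrite Hcrit. unfold Rdiv. ring.
  - unfold d_ss, d_s.
    rewrite (Derive_div (Derive (fun z => f z t)) (fun z => phi z t)); auto;
      [| apply (Hphi nil z0 t Ht) | lra].
    rewrite Hcrit, Rmult_0_l, Rminus_0_r.
    repeat apply Rdiv_le_0_compat; try apply pow_lt; try lra.
    apply Rmult_le_pos; [apply Derive2_ge0_at_min; auto | lra].
Qed.

Lemma pos_uniform_near_slice (H : R -> R -> R) (lo hi tau : R) :
  (forall z, lo <= z <= hi -> continuous (fun p : R * R => H (fst p) (snd p)) (z, tau)) ->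
  (forall z, lo <= z <= hi -> 0 < H z tau) ->
  exists d : posreal, forall z s, lo <= z <= hi -> Rabs (s - tau) < d -> 0 < H z s.
Proof.
  intros Hc Hpos.
  assert (radius : forall z, {r : posreal | lo <= z <= hi ->
            forall z' s, Rabs (z' - z) < r -> Rabs (s - tau) < r -> 0 < H z' s}).
  { intro z. apply constructive_indefinite_description.
    destruct (classic (lo <= z <= hi)) as [Hz | Hz]; [| exists (mkposreal 1 Rlt_0_1); tauto].
    assert (Hhalf : 0 < H z tau / 2) by (pose proof (Hpos z Hz); lra).
    destruct (proj1 (filterlim_locally _ _) (Hc z Hz) (mkposreal _ Hhalf)) as [r Hr].
    exists r. intros _ z' s Hz' Hs.
    specialize (Hr (z', s) (conj Hz' Hs)).
    apply Rabs_def2 in Hr. unfold minus, plus, opp in Hr; simpl in Hr. lra. }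
  (* a Lebesgue number of the continuity radii on the compact slice *)
  destruct (compactness_value_1d lo hi (fun z => proj1_sig (radius z))) as [d Hd].
  exists d. intros z s Hz Hs. apply Rnot_le_lt; intro Hle.
  apply (Hd z Hz). intros [z1 [Hz1 [Hzz1 Hdz1]]].
  assert (Hpos1 := proj2_sig (radius z1) Hz1 z s Hzz1 ltac:(lra)).
  lra.
Qed.

Lemma periodic_z_shift (f : R -> R -> R) t : periodic_z f ->
  forall (k : Z) z, f (z + 2 * PI * IZR k) t = f z t.
Proof.
  intros Hper k. induction k using Z.peano_ind; intro z.
  - rewrite Rmult_0_r, Rplus_0_r. reflexivity.
  - rewrite succ_IZR, <- (IHk z), <- (Hper (z + 2 * PI * IZR k)). f_equal. ring.
  - rewrite <- Z.sub_1_r, minus_IZR, <- (Hper (z + 2 * PI * (IZR k - 1))), <- (IHk z).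
    f_equal. ring.
Qed.

Lemma periodic_z_representative (f : R -> R -> R) t : periodic_z f ->
  forall z, exists z0, 0 <= z0 <= 2 * PI /\ f z t = f z0 t.
Proof.
  intros Hper z. pose proof PI_RGT_0.
  destruct (base_Int_part (z / (2 * PI))) as [Hfloor Hceil].
  set (k := Int_part (z / (2 * PI))) in *.
  exists (z - 2 * PI * IZR k). split.
  - assert (Hz : z = z / (2 * PI) * (2 * PI)) by (field; lra).
    set (q := z / (2 * PI)) in *. nra.
  - rewrite <- (periodic_z_shift f t Hper k (z - 2 * PI * IZR k)). f_equal. ring.
Qed.

Definition barrier_gap (k eps : R) (f : R -> R -> R) (z t : R) : R :=
  f z t ^ 2 - (k - eps - 4 * (1 + eps) * t).

Definition barrier_gaps_pos (k eps : R) (a b c : R -> R -> R) (t : R) : Prop :=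
  forall z, 0 < barrier_gap k eps a z t /\ 0 < barrier_gap k eps b z t /\
            0 < barrier_gap k eps c z t.

Lemma is_derive_barrier_gap (T k eps : R) (f : R -> R -> R) z t :
  smooth_before T f -> t < T ->
  is_derive (fun s => barrier_gap k eps f z s) t (2 * f z t * d_t f z t + 4 * (1 + eps)).
Proof.
  intros Hf Ht. unfold barrier_gap, d_t.
  auto_derive; [exact (proj1 (proj2 (Hf nil z t Ht))) | ring].
Qed.

Lemma continuous_barrier_gap (T k eps : R) (f : R -> R -> R) z t :
  smooth_before T f -> t < T ->
  continuous (fun p : R * R => barrier_gap k eps f (fst p) (snd p)) (z, t).
Proof.
  intros Hf Ht. unfold barrier_gap.
  assert (Hc := proj2 (proj2 (Hf nil z t Ht))). simpl in Hc.
  apply (continuous_minus (fun p : R * R => f (fst p) (snd p) ^ 2)).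
  - apply (continuous_comp (fun p : R * R => f (fst p) (snd p)) (fun x => x ^ 2)); [exact Hc |].
    apply (ex_derive_continuous (fun x : R => x ^ 2)). auto_derive. exact I.
  - apply (continuous_minus (fun _ : R * R => k - eps)); [apply continuous_const |].
    apply (continuous_mult (fun _ : R * R => 4 * (1 + eps)) snd);
      [apply continuous_const | apply continuous_snd].
Qed.

Lemma barrier_gap_pos_near (T k eps tau : R) (f : R -> R -> R) :
  smooth_before T f -> periodic_z f -> tau < T ->
  (forall z, 0 < barrier_gap k eps f z tau) ->
  exists d : posreal, forall z s, Rabs (s - tau) < d -> 0 < barrier_gap k eps f z s.
Proof.
  intros Hf Hper Htau Hpos.
  destruct (pos_uniform_near_slice (barrier_gap k eps f) 0 (2 * PI) tau) as [d Hd].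
  - intros z _. apply (continuous_barrier_gap T); auto.
  - intros z _. apply Hpos.
  - exists d. intros z s Hs.
    destruct (periodic_z_representative f s Hper z) as [z0 [Hz0 Hfz]].
    unfold barrier_gap. rewrite Hfz. apply Hd; auto.
Qed.

Lemma reaction_term_le (X Y Z W : R) :
  0 < X -> X <= Y -> X <= Z -> X * (2 * (X ^ 4 - W ^ 2) / (X * Y ^ 2 * Z ^ 2)) <= 2.
Proof.
  intros HX HXY HXZ.
  assert (HYZ : 0 < Y ^ 2 * Z ^ 2) by (apply Rmult_lt_0_compat; apply pow_lt; lra).
  replace (X * (2 * (X ^ 4 - W ^ 2) / (X * Y ^ 2 * Z ^ 2)))
    with (2 * (X ^ 4 - W ^ 2) / (Y ^ 2 * Z ^ 2)) by (field; repeat split; lra).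
  apply Rle_div_l; [exact HYZ |].
  assert (X ^ 4 <= Y ^ 2 * Z ^ 2).
  { replace (X ^ 4) with (X ^ 2 * X ^ 2) by ring.
    apply Rmult_le_compat; try apply pow2_ge_0; apply pow_incr; lra. }
  nra.
Qed.

(* The system is invariant under cyclic permutations of (a, b, c), so statements proved
   for the first function transfer to the other two. *)
Lemma ricci_flow_eqs_rotate (phi a b c : R -> R -> R) z t :
  ricci_flow_eqs phi a b c z t -> ricci_flow_eqs phi b c a z t.
Proof.
  unfold ricci_flow_eqs. intros [Ha [Hb [Hc Hphi]]].
  set (A := a z t) in *; set (B := b z t) in *; set (C := c z t) in *.
  repeat split.
  - rewrite Hb. replace (B * C ^ 2 * A ^ 2) with (A ^ 2 * B * C ^ 2) by ring.
    replace ((C ^ 2 - A ^ 2) ^ 2) with ((A ^ 2 - C ^ 2) ^ 2) by ring. ring.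
  - rewrite Hc. replace (B ^ 2 * C * A ^ 2) with (A ^ 2 * B ^ 2 * C) by ring.
    replace ((B ^ 2 - A ^ 2) ^ 2) with ((A ^ 2 - B ^ 2) ^ 2) by ring. ring.
  - rewrite Ha. replace (B ^ 2 * C ^ 2 * A) with (A * B ^ 2 * C ^ 2) by ring. ring.
  - rewrite Hphi. ring.
Qed.

Lemma is_RF_solution_rotate (T : R) (phi a b c : R -> R -> R) :
  is_RF_solution T phi a b c -> is_RF_solution T phi b c a.
Proof.
  intros [Hfun Heqs]. split.
  - intros f Hf. apply Hfun. simpl in *. tauto.
  - intros z t Ht. apply ricci_flow_eqs_rotate, Heqs, Ht.
Qed.

Lemma RF_solution_component (T : R) (phi a b c : R -> R -> R) f :
  is_RF_solution T phi a b c -> In f (phi :: a :: b :: c :: nil) ->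
  smooth_before T f /\ periodic_z f /\ (forall z t, 0 <= t < T -> 0 < f z t).
Proof. intros [Hfun _]. apply Hfun. Qed.

Lemma d_t_ge_at_spatial_min (T : R) (phi a b c : R -> R -> R) z t :
  is_RF_solution T phi a b c -> 0 <= t < T ->
  (forall z', a z t <= a z' t) -> a z t <= b z t -> a z t <= c z t ->
  -2 <= a z t * d_t a z t.
Proof.
  intros Hsol Ht Hmin Hab Hac.
  destruct (RF_solution_component T phi a b c phi Hsol) as [Hphi [_ Hphi_pos]]; [simpl; tauto |].
  destruct (RF_solution_component T phi a b c a Hsol) as [Ha [_ Ha_pos]]; [simpl; tauto |].
  destruct (d_s_d_ss_at_spatial_min T phi a z t Ha Hphi (proj2 Ht) (Hphi_pos z t Ht) Hmin)
    as [Hs Hss].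
  destruct (proj2 Hsol z t Ht) as [Heq _]. rewrite Heq, Hs.
  pose proof (reaction_term_le (a z t) (b z t) (c z t) (b z t ^ 2 - c z t ^ 2)
                (Ha_pos z t Ht) Hab Hac).
  pose proof (Ha_pos z t Ht). nra.
Qed.

Lemma barrier_gap_pos_at_limit (T k eps tau : R) (phi a b c : R -> R -> R) :
  is_RF_solution T phi a b c -> 0 < eps -> 0 < tau < T ->
  (forall s, 0 <= s < tau -> barrier_gaps_pos k eps a b c s) ->
  forall z, 0 < barrier_gap k eps a z tau.
Proof.
  intros Hsol Heps Htau Hbefore.
  assert (Hlimit : forall f z, In f (a :: b :: c :: nil) -> 0 <= barrier_gap k eps f z tau).
  { intros f z Hf.
    destruct (RF_solution_component T phi a b c f Hsol) as [Hf_smooth _]; [simpl in *; tauto |].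
    apply continuous_ge0_of_pos_before; [lra | |].
    - apply (ex_derive_continuous (fun s => barrier_gap k eps f z s)).
      eexists. apply (is_derive_barrier_gap T); [exact Hf_smooth | lra].
    - intros s Hs. destruct (Hbefore s Hs z) as [Ha [Hb Hc]].
      destruct Hf as [<- | [<- | [<- | []]]]; assumption. }
  assert (Hpos : forall f z, In f (a :: b :: c :: nil) -> 0 < f z tau).
  { intros f z Hf. apply (RF_solution_component T phi a b c f Hsol); [simpl in *; tauto | lra]. }
  intro z. apply Rnot_le_lt; intro Hle.
  assert (Hzero : barrier_gap k eps a z tau = 0).
  { pose proof (Hlimit a z ltac:(simpl; tauto)). lra. }
  assert (Hbelow : forall f z', In f (a :: b :: c :: nil) -> a z tau <= f z' tau).
  { intros f z' Hf. pose proof (Hlimit f z' Hf). pose proof (Hpos f z' Hf).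
    pose proof (Hpos a z ltac:(simpl; tauto)). unfold barrier_gap in *. nra. }
  pose proof (d_t_ge_at_spatial_min T phi a b c z tau Hsol ltac:(lra)
                (fun z' => Hbelow a z' ltac:(simpl; tauto))
                (Hbelow b z ltac:(simpl; tauto)) (Hbelow c z ltac:(simpl; tauto))).
  assert (Hsmooth : smooth_before T a)
    by (apply (RF_solution_component T phi a b c a Hsol); simpl; tauto).
  pose proof (is_derive_le0_at_first_zero (fun s => barrier_gap k eps a z s) tau _ (proj1 Htau)
                (is_derive_barrier_gap T k eps a z tau Hsmooth (proj2 Htau)) Hzero
                (fun s Hs => proj1 (Hbefore s Hs z))).
  nra.
Qed.

Lemma barrier_gaps_pos_near (T k eps tau : R) (phi a b c : R -> R -> R) :
  is_RF_solution T phi a b c -> tau < T -> barrier_gaps_pos k eps a b c tau ->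
  exists d, 0 < d /\ forall s, tau <= s < tau + d -> barrier_gaps_pos k eps a b c s.
Proof.
  intros Hsol Htau Hgaps.
  assert (Hnear : forall f, In f (a :: b :: c :: nil) ->
            (forall z, 0 < barrier_gap k eps f z tau) ->
            exists d : posreal, forall z s, Rabs (s - tau) < d -> 0 < barrier_gap k eps f z s).
  { intros f Hf Hpos.
    destruct (RF_solution_component T phi a b c f Hsol) as [Hsm [Hper _]]; [simpl in *; tauto |].
    exact (barrier_gap_pos_near T k eps tau f Hsm Hper Htau Hpos). }
  destruct (Hnear a ltac:(simpl; tauto) (fun z => proj1 (Hgaps z))) as [da Hda].
  destruct (Hnear b ltac:(simpl; tauto) (fun z => proj1 (proj2 (Hgaps z)))) as [db Hdb].
  destruct (Hnear c ltac:(simpl; tauto) (fun z => proj2 (proj2 (Hgaps z)))) as [dc Hdc].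
  exists (Rmin da (Rmin db dc)). split.
  - repeat apply Rmin_pos; apply cond_pos.
  - intros s Hs z.
    pose proof (Rmin_l da (Rmin db dc)); pose proof (Rmin_r da (Rmin db dc)).
    pose proof (Rmin_l db dc); pose proof (Rmin_r db dc).
    assert (Habs : Rabs (s - tau) < Rmin da (Rmin db dc)) by (rewrite Rabs_pos_eq; lra).
    repeat split; [apply Hda | apply Hdb | apply Hdc]; lra.
Qed.

Lemma barrier_gaps_pos_at_limit (T k eps tau : R) (phi a b c : R -> R -> R) :
  is_RF_solution T phi a b c -> 0 < eps -> 0 < tau < T ->
  (forall s, 0 <= s < tau -> barrier_gaps_pos k eps a b c s) ->
  barrier_gaps_pos k eps a b c tau.
Proof.
  intros Hsol Heps Htau Hbefore.
  assert (Hrotate : forall s, barrier_gaps_pos k eps a b c s -> barrier_gaps_pos k eps b c a s)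
    by (intros s Hs z; destruct (Hs z) as [? [? ?]]; repeat split; assumption).
  assert (Hrotate' : forall s, barrier_gaps_pos k eps b c a s -> barrier_gaps_pos k eps c a b s)
    by (intros s Hs z; destruct (Hs z) as [? [? ?]]; repeat split; assumption).
  pose proof (is_RF_solution_rotate T phi a b c Hsol) as Hsol'.
  pose proof (is_RF_solution_rotate T phi b c a Hsol') as Hsol''.
  intro z. repeat split.
  - exact (barrier_gap_pos_at_limit T k eps tau phi a b c Hsol Heps Htau Hbefore z).
  - apply (barrier_gap_pos_at_limit T k eps tau phi b c a Hsol' Heps Htau); auto.
  - apply (barrier_gap_pos_at_limit T k eps tau phi c a b Hsol'' Heps Htau); auto.
Qed.

Lemma continuous_induction (P : R -> Prop) (T : R) :
  P 0 ->
  (forall tau, 0 <= tau < T -> P tau -> exists d, 0 < d /\ forall s, tau <= s < tau + d -> P s) ->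
  (forall tau, 0 < tau < T -> (forall s, 0 <= s < tau -> P s) -> P tau) ->
  forall t, 0 <= t < T -> P t.
Proof.
  intros H0 Hopen Hclosed t1 Ht1. apply NNPP; intro Hfail.
  set (E := fun s => 0 <= s <= t1 /\ forall u, 0 <= u <= s -> P u).
  assert (HE0 : E 0) by (split; [lra | intros u Hu; replace u with 0 by lra; exact H0]).
  assert (Hbound : bound E) by (exists t1; intros s [Hs _]; lra).
  destruct (completeness E Hbound (ex_intro _ 0 HE0)) as [tau [Hub Hlub]].
  assert (Htau : 0 <= tau <= t1) by (split; [apply Hub, HE0 | apply Hlub; intros s [Hs _]; lra]).
  assert (Hbefore : forall u, 0 <= u < tau -> P u).
  { intros u Hu. apply NNPP; intro Hu'. assert (tau <= u); [| lra].
    apply Hlub. intros s [Hs HPs]. apply Rnot_lt_le; intro Hlt. apply Hu', HPs. lra. }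
  assert (HPtau : P tau).
  { destruct (Req_dec tau 0) as [-> | ?]; [exact H0 |]. apply Hclosed; [lra | exact Hbefore]. }
  destruct (Req_dec tau t1) as [<- | ?]; [contradiction |].
  destruct (Hopen tau ltac:(lra) HPtau) as [d [Hd Hafter]].
  pose proof (Rmin_l (tau + d / 2) t1); pose proof (Rmin_r (tau + d / 2) t1).
  set (s := Rmin (tau + d / 2) t1) in *.
  assert (tau < s) by (apply Rmin_glb_lt; lra).
  assert (HEs : E s).
  { split; [lra |]. intros u Hu.
    destruct (Rlt_or_le u tau); [apply Hbefore | apply Hafter]; lra. }
  pose proof (Hub s HEs). lra.
Qed.

Lemma barrier_gaps_pos_preserved (T k eps : R) (phi a b c : R -> R -> R) :
  is_RF_solution T phi a b c -> 0 < eps -> barrier_gaps_pos k eps a b c 0 ->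
  forall t, 0 <= t < T -> barrier_gaps_pos k eps a b c t.
Proof.
  intros Hsol Heps H0. apply continuous_induction; [exact H0 | |].
  - intros tau Htau. apply (barrier_gaps_pos_near T k eps tau phi a b c Hsol), Htau.
  - intros tau Htau. apply (barrier_gaps_pos_at_limit T k eps tau phi a b c Hsol Heps Htau).
Qed.

Lemma le_of_barrier_and_collapse (T k : R) (f : R -> R -> R) :
  0 < T -> (forall z t, 0 <= t < T -> 0 < f z t) -> min_tends_to_zero f T ->
  (forall eps, 0 < eps -> forall z t, 0 <= t < T -> k - eps - 4 * (1 + eps) * t < f z t ^ 2) ->
  k <= 4 * T.
Proof.
  intros HT Hpos Hcollapse Hbarrier. apply Rle_plus_epsilon. intros e He.
  set (eps := e / (2 * (1 + 4 * T))).
  assert (Heps : 0 < eps) by (apply Rdiv_lt_0_compat; lra).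
  assert (Heps_T : eps * (1 + 4 * T) = e / 2) by (unfold eps; field; lra).
  pose proof (Rmin_l 1 (e / 2)); pose proof (Rmin_r 1 (e / 2)).
  set (r := Rmin 1 (e / 2)) in *.
  assert (Hr : 0 < r) by (apply Rmin_pos; lra).
  destruct (Hcollapse r Hr) as [d [Hd Hnear]].
  assert (Ht : Rmax (T - d / 2) (T / 2) < T) by (apply Rmax_lub_lt; lra).
  pose proof (Rmax_l (T - d / 2) (T / 2)); pose proof (Rmax_r (T - d / 2) (T / 2)).
  set (t := Rmax (T - d / 2) (T / 2)) in *.
  destruct (Hnear t ltac:(lra)) as [z Hz].
  specialize (Hbarrier eps Heps z t ltac:(lra)).
  pose proof (Hpos z t ltac:(lra)).
  assert (f z t ^ 2 < e / 2) by nra.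
  nra.
Qed.

Theorem corollary4p2 (T : R) (phi a b c : R -> R -> R) :
  0 < T ->
  is_RF_solution T phi a b c ->
  (forall z, 0 < a z 0 <= b z 0 /\ b z 0 <= c z 0) ->
  min_tends_to_zero a T ->
  forall m, is_spatial_min a 0 m -> m ^ 2 / 4 <= T.
Proof.
  intros HT Hsol Hinit Hcollapse m [[z0 Hz0] Hmin].
  assert (Hm : 0 < m) by (rewrite <- Hz0; apply Hinit).
  assert (Hbarrier : forall eps, 0 < eps -> forall z t, 0 <= t < T ->
            m ^ 2 - eps - 4 * (1 + eps) * t < a z t ^ 2).
  { intros eps Heps z t Ht.
    assert (Hstart : barrier_gaps_pos (m ^ 2) eps a b c 0).
    { intro z'. destruct (Hinit z') as [[Ha Hab] Hbc]. specialize (Hmin z').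
      unfold barrier_gap. repeat split; nra. }
    pose proof (proj1 (barrier_gaps_pos_preserved T (m ^ 2) eps phi a b c Hsol Heps Hstart t Ht z)).
    unfold barrier_gap in *. lra. }
  enough (m ^ 2 <= 4 * T) by lra.
  apply (le_of_barrier_and_collapse T (m ^ 2) a); auto.
  apply (RF_solution_component T phi a b c a Hsol). simpl. tauto.
Qed.
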